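(* Let $k\geq 2$ be an integer and let $G$ be an $(\infty,k)$-path forcer with tip vertex $w$. Then $G$ has an $(\infty,k)$-bounded linear forest decomposition, and every $(\infty,k)$-bounded linear forest decomposition $(F_\infty,F_k)$ of $G$ satisfies $d_{F_\infty}(w)=0$ and $w$ is the last vertex of a path of length $k-1$ in $F_k$ (namely, all edges of the path $P$ belong to $F_k$).
   Context: All graphs are loopless but may have parallel edges. A linear forest is a graph each of whose components is a path; it is $k$-bounded if each component has at most $k$ edges, and $\infty$-bounded means any linear forest. An $(\infty,k)$-bounded linear forest decomposition of $G$ is a pair $(F_\infty,F_k)$ of spanning subgraphs whose edge sets partition $E(G)$, with $F_\infty$ a linear forest and $F_k$ a $k$-bounded linear forest. For integers $K>L\geq 2$, a short $(K,L)$-forcer is obtained from a path $v_0v_1\dots v_K$ by doubling every edge $v_iv_{i+1}$, $0\le i\le K-1$, except those with $i = K-1-\mu(L+1)$ for some integer $\mu\in\{0,\ldots,\lfloor (K-1)/(L+1)\rfloor\}$; $v_K$ is its tip vertex. An $(\infty,k)$-path forcer is obtained from a path $P=p_0p_1\dots p_{k-1}$ of length $k-1$ by identifying each of the vertices $p_0,\dots,p_{k-2}$ with the tip vertices of two new disjoint short $(k+1,k)$-forcers; its tip vertex is $w=p_{k-1}$, the unique vertex of degree $1$. *)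

From mathcomp Require Import all_boot.
Set Implicit Arguments. Unset Strict Implicit. Unset Printing Implicit Defensive.

(* Multigraphs (parallel edges allowed) given by a number of vertices n   *)
(* (vertex type 'I_n, vertices identified with nat labels 0..n-1) and a   *)
(* list es of edges, each a pair of endpoint labels; the edge type is     *)
(* 'I_(size es), so parallel edges are distinct edges.                    *)
(* A spanning subgraph is given by its edge set F : {set 'I_(size es)}.   *)

Definition ends (es : seq (nat * nat)) (e : 'I_(size es)) : nat * nat :=
  nth (0, 0) es e.

Definition joinsp (p : nat * nat) (x y : nat) : bool :=
  (p == (x, y)) || (p == (y, x)).

Definition incident (es : seq (nat * nat)) (e : 'I_(size es)) (x : nat) : bool :=
  ((ends e).1 == x) || ((ends e).2 == x).

Definition adjF (n : nat) (es : seq (nat * nat)) (F : {set 'I_(size es)}) :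
  rel 'I_n := fun x y => [exists e in F, joinsp (ends e) x y].

Definition comp (n : nat) (es : seq (nat * nat)) (F : {set 'I_(size es)})
  (x : 'I_n) : {set 'I_n} := [set y | connect (@adjF n es F) x y].

Definition comp_edges (n : nat) (es : seq (nat * nat)) (F : {set 'I_(size es)})
  (x : 'I_n) : {set 'I_(size es)} :=
  [set e in F | [exists y in comp F x, incident e (val y)]].

(* the graph with vertex set C and edge set D is a path
   v_0 v_1 ... v_m (distinct vertices) with edges e_1 ... e_m,
   e_i joining v_{i-1} and v_i *)
Definition is_path_graph (n : nat) (es : seq (nat * nat))
  (C : {set 'I_n}) (D : {set 'I_(size es)}) : Prop :=
  exists (s : seq 'I_n) (t : seq 'I_(size es)),
    [/\ uniq s, C = [set v in s], uniq t, D = [set e in t] &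
        size t = (size s).-1] /\
        forall i, i < size t ->
          joinsp (nth (0, 0) [seq ends e | e <- t] i)
                 (nth 0 [seq val v | v <- s] i)
                 (nth 0 [seq val v | v <- s] i.+1).

Definition linear_forest (n : nat) (es : seq (nat * nat))
  (F : {set 'I_(size es)}) : Prop :=
  forall x : 'I_n, is_path_graph (comp F x) (comp_edges F x).

Definition bounded_linear_forest (n : nat) (es : seq (nat * nat)) (k : nat)
  (F : {set 'I_(size es)}) : Prop :=
  linear_forest n F /\ forall x : 'I_n, #|comp_edges F x| <= k.

Definition inf_k_decomposition (n : nat) (es : seq (nat * nat)) (k : nat)
  (Finf Fk : {set 'I_(size es)}) : Prop :=
  [/\ Finf :|: Fk = setT, Finf :&: Fk = set0,
      linear_forest n Finf & bounded_linear_forest n k Fk].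

(* degree of vertex x in the spanning subgraph F (graphs are loopless) *)
Definition degF (es : seq (nat * nat)) (F : {set 'I_(size es)}) (x : nat) : nat :=
  #|[set e in F | incident e x]|.

(* Short (K,L)-forcer: path v_0 ... v_K, every edge v_i v_{i+1} doubled   *)
(* except for i = K-1-mu(L+1), mu in {0,..,floor((K-1)/(L+1))}.           *)
(* lab i is the global label of v_i (so identification is by labelling).  *)
Definition sf_single (K L i : nat) : bool :=
  has (fun mu => i == K.-1 - mu * L.+1) (iota 0 ((K.-1) %/ L.+1).+1).

Definition short_forcer_edges (K L : nat) (lab : nat -> nat) : seq (nat * nat) :=
  flatten [seq (if sf_single K L i then [:: (lab i, lab i.+1)]
                else [:: (lab i, lab i.+1); (lab i, lab i.+1)]) | i <- iota 0 K].

(* (oo,k)-path forcer: path P = p_0 ... p_{k-1} with p_j labelled j; for  *)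
(* each j <= k-2 and copy c in {0,1}, a short (k+1,k)-forcer whose tip    *)
(* v_{k+1} is p_j and whose other vertices v_0..v_k get fresh labels      *)
(* k + (2j+c)(k+1) + i.  Tip vertex w = p_{k-1} = k-1.                     *)
Definition pf_nverts (k : nat) : nat := k + (k.-1).*2 * k.+1.

Definition pf_label (k j c i : nat) : nat :=
  if i == k.+1 then j else k + (j.*2 + c) * k.+1 + i.

Definition pf_P_edges (k : nat) : seq (nat * nat) :=
  [seq (j, j.+1) | j <- iota 0 k.-1].

Definition pf_edges (k : nat) : seq (nat * nat) :=
  pf_P_edges k ++
  flatten [seq short_forcer_edges k.+1 k (pf_label k j c)
          | j <- iota 0 k.-1, c <- iota 0 2].

Definition pf_tip (k : nat) : nat := k.-1.

(* Existence: F_k is P together with the first copy of each doubled edge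
   (paths with k - 1 and k edges); F_oo consists of the remaining copies and
   the single edges, whose components are the "hooks" through each p_j and
   the isolated tip.
   Necessity: in each short forcer one copy of every doubled edge is in F_k
   (F_oo has no parallel edges), so the single edge must lie in F_oo, else
   F_k would have a component with k + 1 edges.  Thus every p_j, j <= k - 2,
   has its two F_oo edges in its forcers, and the edges of P, in particular
   the only edge at w, are forced into F_k. *)

From Pilot Require Import Defs.
From mathcomp Require Import all_boot zify.
Set Implicit Arguments. Unset Strict Implicit. Unset Printing Implicit Defensive.

Lemma joinsp_sym p x y : joinsp p x y = joinsp p y x.
Proof. by rewrite /joinsp orbC. Qed.

Lemma joinsp_incident p a b c :
  joinsp p a b -> (p.1 == c) || (p.2 == c) -> c = a \/ c = b.
Proof.
case: p => u v; rewrite /joinsp /=.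
by case/orP => /eqP [-> ->] /orP [] /eqP ->; auto.
Qed.

Lemma joinsp_ends p a b c d :
  joinsp p a b -> joinsp p c d -> (a = c /\ b = d) \/ (a = d /\ b = c).
Proof.
case: p => u v; rewrite /joinsp /=.
by case/orP => /eqP [-> ->] /orP [] /eqP [-> ->]; auto.
Qed.

Lemma joinsp_incident_left p a b : joinsp p a b -> (p.1 == a) || (p.2 == a).
Proof. by case: p => u v; rewrite /joinsp /= => /orP [] /eqP [-> ->]; rewrite eqxx ?orbT. Qed.

Lemma adjF_sym n es (F : {set 'I_(size es)}) : symmetric (@adjF n es F).
Proof.
by move=> x y; apply/existsP/existsP => -[e /andP[he hj]]; exists e; rewrite he joinsp_sym.
Qed.

Section LinearForestLocal.
Variables (n : nat) (es : seq (nat * nat)) (F : {set 'I_(size es)}).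
Hypothesis lfF : linear_forest n F.

Lemma linear_forest_at (x : 'I_n) :
  exists (sv : nat -> nat) (t : seq 'I_(size es)),
  [/\ uniq t,
      {in [pred i | i <= size t] &, injective sv},
      (exists2 p, p <= size t & sv p = x) &
      forall e, e \in F -> incident e x ->
        e \in t /\ joinsp (ends e) (sv (index e t)) (sv (index e t).+1)].
Proof.
have [s [t [[us hC ut hD hsz] hj]]] := lfF x.
have xs : x \in s by rewrite -[_ \in s]in_set -hC inE connect0.
have hs1 : size s = (size t).+1 by rewrite hsz prednK //; case: (s) xs.
exists (fun i => nth 0 [seq val v | v <- s] i), t; split => //.
- move=> i j; rewrite !inE => hi hj' /eqP; rewrite nth_uniq ?size_map ?hs1 //.
    by move/eqP.
  by rewrite (map_inj_uniq val_inj).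
- exists (index x s); first by rewrite -ltnS -hs1 index_mem.
  by rewrite (nth_map x) ?index_mem // nth_index.
- move=> e he hi.
  have et : e \in t.
    rewrite -[_ \in t]in_set -hD inE he; apply/existsP; exists x.
    by rewrite inE connect0.
  split => //; have := hj (index e t); rewrite index_mem et => /(_ isT).
  by rewrite (nth_map e) ?index_mem // nth_index.
Qed.

Lemma linear_forest_no_deg3 (x : 'I_n) e1 e2 e3 :
  e1 \in F -> e2 \in F -> e3 \in F ->
  incident e1 x -> incident e2 x -> incident e3 x ->
  e1 != e2 -> e1 != e3 -> e2 != e3 -> False.
Proof.
have [sv [t [ut hinj [p hp hx] hat]]] := linear_forest_at x.
have pos (e : 'I_(size es)) : e \in F -> incident e x ->
    e \in t /\ (index e t = p \/ (index e t).+1 = p).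
  move=> hF hi; have [et hj] := hat e hF hi.
  have il : index e t < size t by rewrite index_mem.
  split => //; have := joinsp_incident hj hi; rewrite -hx => -[] hq.
    by left; apply: hinj; rewrite ?inE ?(ltnW il).
  by right; apply: hinj; rewrite ?inE.
have idx_inj (a b : 'I_(size es)) : a \in t -> b \in t -> a != b -> index a t <> index b t.
  move=> ha hb hab hi; move/eqP: hab; apply.
  by rewrite -(nth_index a ha) hi nth_index.
move=> h1 h2 h3 i1 i2 i3 d12 d13 d23.
have [t1 q1] := pos _ h1 i1; have [t2 q2] := pos _ h2 i2; have [t3 q3] := pos _ h3 i3.
(* pigeonhole: two of the three indices fall on the same side of p *)
case: q1 q2 q3 => [a1|a1] [a2|a2] [a3|a3];
  first [ apply: (idx_inj _ _ t1 t2 d12); congruence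
        | apply: (idx_inj _ _ t1 t3 d13); congruence
        | apply: (idx_inj _ _ t2 t3 d23); congruence ].
Qed.

Lemma linear_forest_no_parallel (x : 'I_n) e1 e2 :
  e1 \in F -> e2 \in F -> ends e1 = ends e2 -> incident e1 x -> e1 != e2 -> False.
Proof.
have [sv [t [ut hinj _ hat]]] := linear_forest_at x.
move=> h1 h2 hee i1 d12.
have i2 : incident e2 x by rewrite /incident -hee.
have [t1 j1] := hat _ h1 i1; have [t2 j2] := hat _ h2 i2.
have l1 : index e1 t < size t by rewrite index_mem.
have l2 : index e2 t < size t by rewrite index_mem.
rewrite hee in j1.
have hi : index e1 t = index e2 t.
  have w1 : index e1 t <= size t by apply: ltnW.
  have w2 : index e2 t <= size t by apply: ltnW.
  case: (joinsp_ends j1 j2) => -[a b]; first by apply: hinj; rewrite ?inE.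
  have : index e1 t = (index e2 t).+1 by apply: hinj; rewrite ?inE.
  have : (index e1 t).+1 = index e2 t by apply: hinj; rewrite ?inE.
  lia.
by move/eqP: d12; apply; rewrite -(nth_index e1 t1) hi nth_index.
Qed.

End LinearForestLocal.

(* A criterion for a component of the spanning subgraph selected by a
   predicate pF on edge indices to be a path with exactly len edges: exhibit
   its vertices sv 0, ..., sv len and edges te 0, ..., te len.-1 explicitly,
   and check that every pF-edge touching the trace is one of the te i. *)
Section PathCriterion.
Variables (n : nat) (es : seq (nat * nat)) (pF : pred nat) (x : 'I_n).
Variables (e0 : 'I_(size es)) (len : nat) (sv te : nat -> nat).
Hypothesis sv_lt : forall i, i <= len -> sv i < n.
Hypothesis te_lt : forall i, i < len -> te i < size es.
Hypothesis sv_inj : forall i j, i <= len -> j <= len -> sv i = sv j -> i = j.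
Hypothesis te_inj : forall i j, i < len -> j < len -> te i = te j -> i = j.
Hypothesis x_on_trace : exists2 i, i <= len & sv i = x.
Hypothesis te_sel : forall i, i < len -> pF (te i).
Hypothesis te_joins : forall i, i < len -> joinsp (nth (0, 0) es (te i)) (sv i) (sv i.+1).
Hypothesis trace_closed : forall e i, e < size es -> pF e -> i <= len ->
  ((nth (0, 0) es e).1 == sv i) || ((nth (0, 0) es e).2 == sv i) ->
  exists2 i', i' < len & te i' = e.

Let F : {set 'I_(size es)} := [set e : 'I_(size es) | pF e].
Let vtx i : 'I_n := insubd x (sv i).
Let edg i : 'I_(size es) := insubd e0 (te i).
Let s := [seq vtx i | i <- iota 0 len.+1].
Let t := [seq edg i | i <- iota 0 len].

Let vtxE i : i <= len -> val (vtx i) = sv i.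
Proof. by move=> hi; rewrite val_insubd sv_lt. Qed.

Let edgE i : i < len -> val (edg i) = te i.
Proof. by move=> hi; rewrite val_insubd te_lt. Qed.

Let mem_s w : reflect (exists2 i, i <= len & w = vtx i) (w \in s).
Proof.
apply: (iffP mapP) => -[i hi ->]; exists i => //; move: hi.
  by rewrite mem_iota add0n.
by rewrite mem_iota.
Qed.

Let mem_t e : reflect (exists2 i, i < len & e = edg i) (e \in t).
Proof.
apply: (iffP mapP) => -[i hi ->]; exists i => //; move: hi.
  by rewrite mem_iota add0n.
by rewrite mem_iota.
Qed.

Let ends_edg i : i < len -> ends (edg i) = nth (0, 0) es (te i).
Proof. by move=> hi; rewrite /ends edgE. Qed.

Let trace_adj i : i < len -> adjF F (vtx i) (vtx i.+1).
Proof.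
move=> hi; apply/existsP; exists (edg i).
by rewrite inE edgE // te_sel //= ends_edg // !vtxE ?te_joins // ltnW.
Qed.

Let trace_adj_closed y z : adjF F y z -> y \in s -> z \in s.
Proof.
case/existsP => e /andP []; rewrite inE => he hj /mem_s [i hi hy].
have [i' hi' hte] : exists2 i', i' < len & te i' = e.
  apply: (trace_closed (ltn_ord e) he hi).
  by rewrite -(vtxE hi) -hy; exact: joinsp_incident_left hj.
have hj' := te_joins hi'; rewrite hte -/(ends e) in hj'.
apply/mem_s; case: (joinsp_ends hj hj') => -[_ hz].
  by exists i'.+1 => //; apply: val_inj; rewrite vtxE.
by exists i'; [exact: ltnW | apply: val_inj; rewrite vtxE // ltnW].
Qed.

Let comp_trace : Defs.comp F x = [set w in s].
Proof.
have [i0 hi0 hx] := x_on_trace.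
have xv : x = vtx i0 by apply: val_inj; rewrite vtxE.
have csym := sym_connect_sym (@adjF_sym n es F).
have from0 i : i <= len -> connect (adjF F) (vtx 0) (vtx i).
  elim: i => [|i IH] hi; first exact: connect0.
  exact: connect_trans (IH (ltnW hi)) (connect1 (trace_adj hi)).
apply/setP => w; rewrite !in_set; apply/idP/idP => [hc|/mem_s [i hi ->]].
  have xs : x \in s by apply/mem_s; exists i0.
  by rewrite -(closed_connect (intro_closed csym trace_adj_closed) hc).
by rewrite xv; apply: connect_trans (from0 _ hi); rewrite csym from0.
Qed.

Let comp_edges_trace : comp_edges F x = [set e in t].
Proof.
apply/setP => e; rewrite !in_set; apply/idP/idP.
  case/andP => he /existsP [y /andP []]; rewrite comp_trace in_set.
  case/mem_s => i hi -> hinc.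
  have [i' hi' hte] : exists2 i', i' < len & te i' = e.
    by apply: (trace_closed (ltn_ord e) he hi); rewrite -(vtxE hi).
  by apply/mem_t; exists i' => //; apply: val_inj; rewrite edgE.
case/mem_t => i hi ->; rewrite edgE // te_sel //=.
apply/existsP; exists (vtx i); rewrite comp_trace in_set.
apply/andP; split; first by apply/mem_s; exists i => //; exact: ltnW.
by rewrite /incident ends_edg // vtxE ?(ltnW hi) //; exact: joinsp_incident_left (te_joins hi).
Qed.

Let uniq_t : uniq t.
Proof.
rewrite map_inj_in_uniq ?iota_uniq // => i j; rewrite !mem_iota !add0n.
by move=> /andP [_ hi] /andP [_ hj] h; apply: te_inj => //; rewrite -edgE // h edgE.
Qed.

Let uniq_s : uniq s.
Proof.
rewrite map_inj_in_uniq ?iota_uniq // => i j; rewrite !mem_iota !add0n.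
by move=> /andP [_ hi] /andP [_ hj] h; apply: sv_inj => //; rewrite -vtxE // h vtxE.
Qed.

Lemma path_component :
  is_path_graph (Defs.comp F x) (comp_edges F x) /\ #|comp_edges F x| = len.
Proof.
split; last first.
  by rewrite comp_edges_trace cardsE; move/card_uniqP: uniq_t ->; rewrite size_map size_iota.
exists s, t; split; first by split; rewrite // !size_map !size_iota.
move=> i; rewrite size_map size_iota => hi.
have nth_s j : j <= len -> nth 0 [seq val w | w <- s] j = sv j.
  move=> hj; rewrite (nth_map x) ?size_map ?size_iota //.
  by rewrite (nth_map 0) ?size_iota // nth_iota // vtxE.
rewrite (nth_map e0) ?size_map ?size_iota // (nth_map 0) ?size_iota // nth_iota //.
by rewrite ends_edg // !nth_s ?te_joins // ltnW.
Qed.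

End PathCriterion.

Lemma card_ge_images (I : finType) (T : eqType) (A : {set I}) (f : I -> T) (Q : seq T) :
  uniq Q -> (forall q, q \in Q -> exists2 e, e \in A & f e = q) -> size Q <= #|A|.
Proof.
move=> uQ hQ; rewrite cardE -(size_map f (enum A)).
by apply: uniq_leq_size => // q /hQ [e he <-]; apply: map_f; rewrite mem_enum.
Qed.

Lemma nth_flatten_blocks (T : Type) (x0 : T) (ss : seq (seq T)) m b r :
  all (fun s => size s == m) ss -> r < m -> b < size ss ->
  nth x0 (flatten ss) (b * m + r) = nth x0 (nth [::] ss b) r.
Proof.
elim: ss b => [|s ss IH] b //= /andP[/eqP hs hall] hr hb.
rewrite nth_cat hs; case: b hb => [|b] hb; first by rewrite mul0n add0n hr.
rewrite mulSn -addnA ltnNge leq_addr /= addKn.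
exact: IH.
Qed.

Lemma size_flatten_blocks (T : Type) (ss : seq (seq T)) m :
  all (fun s => size s == m) ss -> size (flatten ss) = size ss * m.
Proof. by elim: ss => [|s ss IH] //= /andP[/eqP hs /IH h]; rewrite size_cat hs h mulSn. Qed.

Lemma nth_allpairs_bit (T : Type) (f : nat -> nat -> T) x0 N a b : b < N.*2 ->
  nth x0 [seq f j c | j <- iota a N, c <- iota 0 2] b = f (a + b %/ 2) (b %% 2).
Proof.
elim: N a b => [|N IH] a b //= hb.
case: b hb => [|[|b]] hb /=; rewrite ?addn0 //.
rewrite IH; last by lia.
congr f; lia.
Qed.

Lemma sf_singleE k i : sf_single k.+1 k i = (i == k).
Proof. by rewrite /sf_single /= divn_small ?ltnSn //= mul0n subn0 orbF. Qed.

Lemma nth_doubled_but_last (q : nat -> nat * nat) (n a r : nat) : r <= n.*2 ->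
  let s := flatten [seq (if i == a + n then [:: q i] else [:: q i; q i])
                   | i <- iota a n.+1] in
  nth (0, 0) s r = q (a + r %/ 2) /\ size s = n.*2.+1.
Proof.
elim: n a r => [|n IH] a r hr /=.
  have -> : r = 0 by lia.
  by rewrite addn0 eqxx.
rewrite (_ : a == a + n.+1 = false); last by apply/eqP; lia.
have [_ hsz] := IH a.+1 0 (leq0n _); rewrite addSnnS in hsz.
rewrite /= hsz; split => //.
case: r hr => [|[|r]] hr //=; rewrite ?addn0 //.
have [h _] := IH a.+1 r ltac:(lia); rewrite addSnnS in h.
by rewrite h; congr q; lia.
Qed.

(* Edge r of a short (k+1,k)-forcer labelled by lab joins v_(r/2) and
   v_(r/2+1): edges 2i and 2i+1 are the two copies of v_i v_(i+1), i < k,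
   and edge 2k is the single edge v_k v_(k+1). *)
Lemma short_forcer_nth k (lab : nat -> nat) r : r <= k.*2 ->
  nth (0, 0) (short_forcer_edges k.+1 k lab) r = (lab (r %/ 2), lab (r %/ 2).+1) /\
  size (short_forcer_edges k.+1 k lab) = k.*2.+1.
Proof.
move=> hr; rewrite /short_forcer_edges.
under eq_map => i do rewrite sf_singleE.
exact: (@nth_doubled_but_last (fun i => (lab i, lab i.+1)) k 0 r hr).
Qed.

Section PathForcer.
Variable k : nat.
Hypothesis hk : 2 <= k.

(* The edge list pf_edges k consists of the N edges p_j p_(j+1) of P,
   followed by 2N blocks of m edges, block b = 2j + c being the c-th short
   forcer hanging at p_j; its vertex v_i (i <= k) is fvert b i and its
   r-th edge is fedge b r. *)
Local Notation N := k.-1.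
Local Notation m := k.*2.+1.
Local Notation es := (pf_edges k).
Local Notation n := (pf_nverts k).
Local Notation fvert b i := (k + b * k.+1 + i).
Local Notation fedge b r := (N + b * m + r).

Let forcers := [seq short_forcer_edges k.+1 k (pf_label k j c)
               | j <- iota 0 N, c <- iota 0 2].

Let forcers_size : all (fun s => size s == m) forcers.
Proof.
apply/allP => s /allpairsP [[j c] [_ _ ->]].
by have [_ ->] := short_forcer_nth (pf_label k j c) (leq0n k.*2).
Qed.

Lemma size_pf_edges : size es = N + N.*2 * m.
Proof.
rewrite /pf_edges size_cat /pf_P_edges size_map size_iota.
by rewrite (size_flatten_blocks forcers_size) size_allpairs !size_iota muln2.
Qed.

Lemma ends_P e : e < N -> nth (0, 0) es e = (e, e.+1).
Proof.
move=> he; rewrite /pf_edges nth_cat /pf_P_edges size_map size_iota he.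
by rewrite (nth_map 0) ?size_iota // nth_iota.
Qed.

Lemma ends_forcer b r : b < N.*2 -> r < m ->
  nth (0, 0) es (fedge b r) =
    (pf_label k (b %/ 2) (b %% 2) (r %/ 2), pf_label k (b %/ 2) (b %% 2) (r %/ 2).+1).
Proof.
move=> hb hr; rewrite /pf_edges nth_cat /pf_P_edges size_map size_iota.
rewrite -addnA ltnNge leq_addr addKn.
rewrite nth_flatten_blocks // ?size_allpairs ?size_iota ?muln2 //.
rewrite nth_allpairs_bit // add0n /=.
by have [-> _] := @short_forcer_nth k (pf_label k (b %/ 2) (b %% 2)) r ltac:(lia).
Qed.

Lemma ends_double b q c : b < N.*2 -> q < k -> c < 2 ->
  nth (0, 0) es (fedge b (q.*2 + c)) = (fvert b q, fvert b q.+1).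
Proof.
move=> hb hq hc; rewrite ends_forcer //; last by lia.
rewrite /pf_label (_ : (q.*2 + c) %/ 2 = q); last by lia.
rewrite !ifN_eq; try lia.
by congr pair; lia.
Qed.

Lemma ends_single b : b < N.*2 -> nth (0, 0) es (fedge b k.*2) = (fvert b k, b %/ 2).
Proof.
move=> hb; rewrite ends_forcer //.
rewrite /pf_label (_ : k.*2 %/ 2 = k) ?eqxx ?ifN_eq; try lia.
by congr pair; lia.
Qed.

Lemma fvert_inj b b' i i' : i <= k -> i' <= k -> fvert b i = fvert b' i' -> b = b' /\ i = i'.
Proof.
move=> hi hi' h.
have e1 : (b * k.+1 + i) %/ k.+1 = (b' * k.+1 + i') %/ k.+1 by congr divn; lia.
rewrite !divnMDl // !divn_small ?ltnS // !addn0 in e1.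
by subst b'; split => //; lia.
Qed.

Lemma fvert_lt b i : b < N.*2 -> i <= k -> fvert b i < n.
Proof.
move=> hb hi; rewrite /pf_nverts.
have : b.+1 * k.+1 <= N.*2 * k.+1 by rewrite leq_mul2r hb orbT.
rewrite mulSn; lia.
Qed.

Lemma fedge_inj b b' r r' : r < m -> r' < m -> fedge b r = fedge b' r' -> b = b' /\ r = r'.
Proof.
move=> hr hr' h.
have e1 : (b * m + r) %/ m = (b' * m + r') %/ m by congr divn; lia.
rewrite !divnMDl // !divn_small // !addn0 in e1.
by subst b'; split => //; lia.
Qed.

Lemma fedge_lt b r : b < N.*2 -> r < m -> fedge b r < size es.
Proof.
move=> hb hr; rewrite size_pf_edges.
have : b.+1 * m <= N.*2 * m by rewrite leq_mul2r hb orbT.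
rewrite mulSn; lia.
Qed.

Lemma edge_cases e : e < size es ->
  [\/ e < N,
      exists b q c, [/\ b < N.*2, q < k, c < 2 & e = fedge b (q.*2 + c)] |
      exists2 b, b < N.*2 & e = fedge b k.*2].
Proof.
rewrite size_pf_edges => he.
have [hN|hN] := ltnP e N; first by constructor 1.
have hd := divn_eq (e - N) m.
have hr : (e - N) %% m < m by rewrite ltn_pmod.
have hb : (e - N) %/ m < N.*2 by rewrite ltn_divLR //; lia.
have [hr2|hr2] := ltnP ((e - N) %% m) k.*2.
  by constructor 2; exists ((e - N) %/ m), ((e - N) %% m %/ 2), ((e - N) %% m %% 2); split; lia.
by constructor 3; exists ((e - N) %/ m); lia.
Qed.

Lemma vert_cases x : x < n -> x < k \/ exists b i, [/\ b < N.*2, i <= k & x = fvert b i].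
Proof.
rewrite /pf_nverts => hx.
have [hlt|hge] := ltnP x k; [by left | right].
exists ((x - k) %/ k.+1), ((x - k) %% k.+1); split.
- by rewrite ltn_divLR //; lia.
- by rewrite -ltnS ltn_pmod.
- by have := divn_eq (x - k) k.+1; lia.
Qed.

(* The F_k of the decomposition we exhibit: P together with the first copy
   of every doubled forcer edge, i.e. the spine v_0 ... v_k of each forcer.
   Its complement consists of the second copies and the single edges. *)
Definition spine_edge (e : nat) : bool :=
  (e < N) || (((e - N) %% m < k.*2) && ((e - N) %% m %% 2 == 0)).

Lemma spine_P e : e < N -> spine_edge e.
Proof. by rewrite /spine_edge => ->. Qed.

Lemma spine_double b q c : q < k -> c < 2 -> spine_edge (fedge b (q.*2 + c)) = (c == 0).
Proof.
move=> hq hc; rewrite /spine_edge ltnNge -addnA leq_addr /= addKn modnMDl modn_small; last by lia.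
case: c hc => [|[|c]] // _; rewrite modn2 ?addn0 ?addn1 /= odd_double ?andbF //.
by rewrite ltn_double hq.
Qed.

Lemma spine_single b : spine_edge (fedge b k.*2) = false.
Proof.
by rewrite /spine_edge ltnNge -addnA leq_addr /= addKn modnMDl modn_small ?ltnn.
Qed.

Let e0 : 'I_(size es).
Proof. by exists (fedge 0 0); apply: fedge_lt; lia. Defined.

Local Notation spine := [set e : 'I_(size es) | spine_edge e].
Local Notation cospine := [set e : 'I_(size es) | ~~ spine_edge e].

Lemma spine_comp_P (x : 'I_n) : x < k ->
  is_path_graph (Defs.comp spine x) (comp_edges spine x) /\ #|comp_edges spine x| = N.
Proof.
move=> hx; apply: (@path_component n es spine_edge x e0 N id id) => //.
- by move=> i hi; rewrite /pf_nverts /=; lia.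
- by move=> i hi; rewrite size_pf_edges; exact: leq_trans hi (leq_addr _ _).
- by exists (nat_of_ord x) => //; lia.
- exact: spine_P.
- by move=> i hi; rewrite ends_P // /joinsp eqxx.
move=> e i he hsp hi /= hinc; case: (edge_cases he) => [heN|[b [q [c [hb hq hc ee]]]]|[b hb ee]].
- by exists e.
- by move: hinc; rewrite ee ends_double //= => /orP [] /eqP; lia.
- by rewrite ee spine_single in hsp.
Qed.

Lemma spine_comp_forcer (x : 'I_n) b i0 : b < N.*2 -> i0 <= k -> val x = fvert b i0 ->
  is_path_graph (Defs.comp spine x) (comp_edges spine x) /\ #|comp_edges spine x| = k.
Proof.
move=> hb hi0 hx.
apply: (@path_component n es spine_edge x e0 k (fun i => fvert b i) (fun i => fedge b (i.*2 + 0))).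
- by move=> i hi; apply: fvert_lt.
- by move=> i hi; apply: fedge_lt => //; lia.
- by move=> i j hi hj /fvert_inj [].
- by move=> i j hi hj /fedge_inj [] //; lia.
- by exists i0.
- by move=> i hi; rewrite spine_double.
- by move=> i hi; rewrite ends_double // /joinsp eqxx.
move=> e i he hsp hi /= hinc; case: (edge_cases he) => [heN|[b' [q [c [hb' hq hc ee]]]]|[b' hb' ee]].
- by move: hinc; rewrite ends_P //= => /orP [] /eqP; lia.
- subst e; move: hsp; rewrite spine_double // => /eqP ?; subst c.
  exists q => //; move: hinc; rewrite ends_double //= => /orP [] /eqP /fvert_inj [] //; lia.
- by subst e; rewrite spine_single in hsp.
Qed.

(* Off the spine, the two forcers hanging at p_j (j < N) form one path with
   2k + 2 edges, the "hook" at p_j: along the second copies from v_0 to v_k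
   of forcer 2j, then over the two single edges through p_j, then back along
   the second copies of forcer 2j + 1 from v_k to v_0. *)
Section Hook.
Variable j : nat.
Hypothesis hj : j < N.

Definition hook_vertex i :=
  if i <= k then fvert j.*2 i else if i == k.+1 then j else fvert j.*2.+1 (k.*2.+2 - i).

Definition hook_edge i :=
  if i < k then fedge j.*2 (i.*2 + 1)
  else if i == k then fedge j.*2 k.*2
  else if i == k.+1 then fedge j.*2.+1 k.*2
  else fedge j.*2.+1 ((k.*2.+1 - i).*2 + 1).

Lemma hook_vertex_cases i : i <= k.*2.+2 ->
  [\/ i <= k /\ hook_vertex i = fvert j.*2 i, i = k.+1 /\ hook_vertex i = j |
      [/\ k.+2 <= i, k.*2.+2 - i <= k & hook_vertex i = fvert j.*2.+1 (k.*2.+2 - i)]].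
Proof.
move=> hi; rewrite /hook_vertex.
case: ifP => h1; first by constructor 1.
case: ifP => h2; first by constructor 2; split => //; apply/eqP.
by constructor 3; split => //; lia.
Qed.

Lemma hook_edge_cases i : i < k.*2.+2 ->
  [\/ i < k /\ hook_edge i = fedge j.*2 (i.*2 + 1),
      i = k /\ hook_edge i = fedge j.*2 k.*2,
      i = k.+1 /\ hook_edge i = fedge j.*2.+1 k.*2 |
      [/\ k.+2 <= i, k.*2.+1 - i < k & hook_edge i = fedge j.*2.+1 ((k.*2.+1 - i).*2 + 1)]].
Proof.
move=> hi; rewrite /hook_edge.
case: ifP => h1; first by constructor 1.
case: ifP => h2; first by constructor 2; split => //; apply/eqP.
case: ifP => h3; first by constructor 3; split => //; apply/eqP.
by constructor 4; split => //; lia.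
Qed.

Lemma hook_vertex_lt i : i <= k.*2.+2 -> hook_vertex i < n.
Proof.
case/hook_vertex_cases => [[h ->]|[h ->]|[h1 h2 ->]]; try (apply: fvert_lt; lia).
by apply: ltn_addr; lia.
Qed.

Lemma hook_edge_lt i : i < k.*2.+2 -> hook_edge i < size es.
Proof. by case/hook_edge_cases => [[h ->]|[h ->]|[h ->]|[h1 h2 ->]]; apply: fedge_lt; lia. Qed.

Lemma hook_vertex_inj i1 i2 : i1 <= k.*2.+2 -> i2 <= k.*2.+2 ->
  hook_vertex i1 = hook_vertex i2 -> i1 = i2.
Proof.
move=> h1 h2.
case: (hook_vertex_cases h1) => [[a1 ->]|[a1 ->]|[a1 b1 ->]];
case: (hook_vertex_cases h2) => [[a2 ->]|[a2 ->]|[a2 b2 ->]] => h;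
  try (move: h => /fvert_inj []; lia); lia.
Qed.

Lemma hook_edge_inj i1 i2 : i1 < k.*2.+2 -> i2 < k.*2.+2 -> hook_edge i1 = hook_edge i2 -> i1 = i2.
Proof.
move=> h1 h2.
case: (hook_edge_cases h1) => [[a1 ->]|[a1 ->]|[a1 ->]|[a1 b1 ->]];
case: (hook_edge_cases h2) => [[a2 ->]|[a2 ->]|[a2 ->]|[a2 b2 ->]] => h;
  move: h => /fedge_inj []; lia.
Qed.

Lemma hook_edge_off_spine i : i < k.*2.+2 -> ~~ spine_edge (hook_edge i).
Proof.
by case/hook_edge_cases => [[h ->]|[h ->]|[h ->]|[h1 h2 ->]];
  rewrite ?spine_single ?spine_double //; lia.
Qed.

Lemma hook_edge_joins i : i < k.*2.+2 ->
  joinsp (nth (0, 0) es (hook_edge i)) (hook_vertex i) (hook_vertex i.+1).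
Proof.
rewrite /joinsp => hi; apply/orP.
case/hook_edge_cases: (hi) => [[h ->]|[-> ->]|[-> ->]|[h1 h2 ->]].
- by left; rewrite ends_double //; try lia; rewrite /hook_vertex !ifT //; lia.
- left; rewrite ends_single; last by lia.
  by rewrite /hook_vertex leqnn ltnn eqxx; apply/eqP; congr pair; lia.
- right; rewrite ends_single; last by lia.
  rewrite /hook_vertex ltnn eqxx !ifN //; try lia.
  by apply/eqP; congr pair; [congr addn; lia | lia].
- right; rewrite ends_double //; try lia.
  rewrite /hook_vertex !ifN //; try lia.
  by apply/eqP; congr pair; congr addn; lia.
Qed.

Lemma hook_meets_forcer b i0 i : i0 <= k -> i <= k.*2.+2 ->
  fvert b i0 = hook_vertex i -> b = j.*2 \/ b = j.*2.+1.
Proof.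
move=> hi0 hi; case: (hook_vertex_cases hi) => [[a ->]|[a ->]|[a1 a2 ->]].
- by move=> /fvert_inj [] // -> _; left.
- by lia.
- by move=> /fvert_inj [] // -> _; right.
Qed.

Lemma hook_edge_first q : q < k -> hook_edge q = fedge j.*2 (q.*2 + 1).
Proof. by move=> hq; rewrite /hook_edge hq. Qed.

Lemma hook_edge_second q : q < k -> hook_edge (k.*2.+1 - q) = fedge j.*2.+1 (q.*2 + 1).
Proof. by move=> hq; rewrite /hook_edge !ifN; try lia; congr addn; lia. Qed.

Lemma hook_edge_single c : c < 2 -> hook_edge (k + c) = fedge (j.*2 + c) k.*2.
Proof.
case: c => [|[|c]] // _; rewrite /hook_edge; first by rewrite addn0 ltnn eqxx addn0.
have -> : (k + 1 < k) = false by lia.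
have -> : (k + 1 == k) = false by lia.
by rewrite addn1 eqxx addn1.
Qed.

Lemma hook_closed e i : e < size es -> ~~ spine_edge e -> i <= k.*2.+2 ->
  ((nth (0, 0) es e).1 == hook_vertex i) || ((nth (0, 0) es e).2 == hook_vertex i) ->
  exists2 i', i' < k.*2.+2 & hook_edge i' = e.
Proof.
move=> he hsp hi hinc.
case: (edge_cases he) => [heN|[b [q [c [hb hq hc ee]]]]|[b hb ee]].
- by rewrite spine_P in hsp.
- subst e; rewrite spine_double // in hsp.
  have -> : c = 1 by lia.
  have [q' hq' /hook_meets_forcer hbj] : exists2 q', q' <= k & fvert b q' = hook_vertex i.
    by move: hinc; rewrite ends_double //= => /orP [] /eqP hv; [exists q => //; lia | exists q.+1].
  case: (hbj hq' hi) => ->.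
  + by exists q; [lia | rewrite hook_edge_first].
  + by exists (k.*2.+1 - q); [lia | rewrite hook_edge_second].
- subst e; have [c hc hbc] : exists2 c, c < 2 & b = j.*2 + c.
    move: hinc; rewrite ends_single //= => /orP [] /eqP hv.
      by case: (hook_meets_forcer (leqnn k) hi hv) => ->; [exists 0; rewrite ?addn0 | exists 1; rewrite ?addn1].
    exists (b %% 2); first by rewrite ltn_mod.
    by case: (hook_vertex_cases hi) hv => [[a ->]|[a ->]|[a1 a2 ->]]; lia.
  by exists (k + c); [lia | rewrite hook_edge_single // hbc].
Qed.

Lemma hook_component (x : 'I_n) : (exists2 i, i <= k.*2.+2 & hook_vertex i = x) ->
  is_path_graph (Defs.comp cospine x) (comp_edges cospine x).
Proof.
move=> hx.
by have [] := @path_component n es (fun e => ~~ spine_edge e) x e0 (k.*2.+2)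
  hook_vertex hook_edge hook_vertex_lt hook_edge_lt hook_vertex_inj hook_edge_inj
  hx hook_edge_off_spine hook_edge_joins hook_closed.
Qed.

End Hook.

Lemma tip_component (x : 'I_n) : val x = N ->
  is_path_graph (Defs.comp cospine x) (comp_edges cospine x).
Proof.
move=> hx.
have [] // := @path_component n es (fun e => ~~ spine_edge e) x e0 0 (fun _ => N) (fun _ => 0).
- by move=> i _; rewrite -hx; exact: ltn_ord.
- by move=> [|?] [|?].
- by exists 0.
move=> e i he; case: (edge_cases he) => [heN|[b [q [c [hb hq hc ->]]]]|[b hb ->]] hsp _ hinc.
- by rewrite spine_P in hsp.
- by move: hinc; rewrite ends_double //= => /orP [] /eqP; lia.
- by move: hinc; rewrite ends_single //= => /orP [] /eqP; lia.
Qed.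

(* Every vertex lies on a hook or is the tip, so the off-spine edges form a
   linear forest. *)
Lemma cospine_linear_forest : linear_forest n cospine.
Proof.
move=> x; case: (vert_cases (ltn_ord x)) => [hx|[b [i [hb hi hx]]]].
  have [hN|hN] := eqVneq (nat_of_ord x) N; first exact: tip_component.
  apply: (@hook_component x); first lia.
  by exists k.+1; [lia | rewrite /hook_vertex ltnn eqxx].
apply: (@hook_component (b %/ 2)); first lia.
have [hb2|hb2] : b = (b %/ 2).*2 \/ b = (b %/ 2).*2.+1 by lia.
- by exists i; [lia | rewrite /hook_vertex hi hx -hb2].
- exists (k.*2.+2 - i); first lia.
  by rewrite /hook_vertex !ifN; try lia; rewrite hx -hb2; congr addn; lia.
Qed.

Lemma spine_bounded_linear_forest : bounded_linear_forest n k spine.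
Proof.
split=> x; case: (vert_cases (ltn_ord x)) => [hx|[b [i [hb hi hx]]]].
- by case: (spine_comp_P hx).
- by case: (spine_comp_forcer hb hi hx).
- by case: (spine_comp_P hx) => _ ->; exact: leq_pred.
- by case: (spine_comp_forcer hb hi hx) => _ ->.
Qed.

Lemma path_forcer_decomposable :
  exists Finf Fk : {set 'I_(size es)}, inf_k_decomposition n k Finf Fk.
Proof.
exists cospine, spine; split.
- by apply/setP => e; rewrite !inE orNb.
- by apply/setP => e; rewrite !inE andNb.
- exact: cospine_linear_forest.
- exact: spine_bounded_linear_forest.
Qed.

Section Forced.
Variables Finf Fk : {set 'I_(size es)}.
Hypothesis dec : inf_k_decomposition n k Finf Fk.

Let lfFinf : linear_forest n Finf.
Proof. by case: dec. Qed.

Let bounded_Fk : bounded_linear_forest n k Fk.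
Proof. by case: dec. Qed.

Lemma notin_Finf (e : 'I_(size es)) : e \notin Finf -> e \in Fk.
Proof.
case: dec => hU _ _ _ he.
have : e \in Finf :|: Fk by rewrite hU inE.
by rewrite inE (negbTE he).
Qed.

Let v0 : 'I_n.
Proof. by exists (fvert 0 0); apply: fvert_lt; lia. Defined.

Let vtx (z : nat) : 'I_n := insubd v0 z.
Let edg (r : nat) : 'I_(size es) := insubd e0 r.

Let vtxE z : z < n -> val (vtx z) = z.
Proof. by move=> hz; rewrite val_insubd hz. Qed.

Let edgE r : r < size es -> val (edg r) = r.
Proof. by move=> hr; rewrite val_insubd hr. Qed.

(* Finf has no parallel edges, so one copy of each doubled edge is in Fk. *)
Lemma doubled_edge_in_Fk b q : b < N.*2 -> q < k ->
  exists2 a, a \in Fk & ends a = (fvert b q, fvert b q.+1).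
Proof.
move=> hb hq.
have ends_copy c : c < 2 -> ends (edg (fedge b (q.*2 + c))) = (fvert b q, fvert b q.+1).
  by move=> hc; rewrite /ends edgE ?ends_double //; apply: fedge_lt; lia.
have [f0|f0] := boolP (edg (fedge b (q.*2 + 0)) \in Finf); last first.
  by exists (edg (fedge b (q.*2 + 0))); [exact: notin_Finf | exact: ends_copy].
have [f1|f1] := boolP (edg (fedge b (q.*2 + 1)) \in Finf); last first.
  by exists (edg (fedge b (q.*2 + 1))); [exact: notin_Finf | exact: ends_copy].
exfalso; apply: (linear_forest_no_parallel (x := vtx (fvert b q)) lfFinf f0 f1).
- by rewrite !ends_copy.
- by rewrite /incident ends_copy // vtxE ?eqxx //; apply: fvert_lt; lia.
apply/eqP => /(congr1 val); rewrite !edgE; try (apply: fedge_lt; lia).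
by move=> /fedge_inj []; lia.
Qed.

Lemma forcer_Fk_connected b i : b < N.*2 -> i <= k ->
  vtx (fvert b i) \in Defs.comp Fk (vtx (fvert b 0)).
Proof.
move=> hb; elim: i => [|i IH] hi; first by rewrite inE connect0.
have := IH (ltnW hi); rewrite !inE => /connect_trans; apply; apply: connect1.
have [a ha ea] := doubled_edge_in_Fk hb hi; apply/existsP; exists a.
by rewrite ha ea !vtxE ?/joinsp ?eqxx //; apply: fvert_lt => //; lia.
Qed.

(* The single edge of every forcer lies in Finf: otherwise the component of
   Fk through that forcer would have k + 1 edges. *)
Lemma single_edge_in_Finf b : b < N.*2 -> edg (fedge b k.*2) \in Finf.
Proof.
move=> hb; apply/negPn/negP => /notin_Finf hs.
have hsz : fedge b k.*2 < size es by apply: fedge_lt; lia.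
pose Q := [seq (fvert b i, if i == k then b %/ 2 else fvert b i.+1) | i <- iota 0 k.+1].
have uQ : uniq Q.
  rewrite map_inj_in_uniq ?iota_uniq // => i1 i2; rewrite !mem_iota !add0n.
  by move=> h1 h2 [/fvert_inj []]; lia.
have hB := bounded_Fk.2 (vtx (fvert b 0)).
suff /(card_ge_images uQ) : forall q, q \in Q ->
    exists2 e, e \in comp_edges Fk (vtx (fvert b 0)) & ends e = q.
  by rewrite size_map size_iota; lia.
move=> q /mapP [i]; rewrite mem_iota add0n => /andP [_ hi] ->.
have hik : i <= k by lia.
have incident_comp (a : 'I_(size es)) : a \in Fk -> (ends a).1 = fvert b i ->
    a \in comp_edges Fk (vtx (fvert b 0)).
  move=> ha ea; rewrite inE ha; apply/existsP; exists (vtx (fvert b i)).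
  rewrite forcer_Fk_connected // /incident ea vtxE ?eqxx //; apply: fvert_lt; lia.
have [eik | hne] := eqVneq i k.
  subst i; exists (edg (fedge b k.*2)); last by rewrite /ends edgE ?ends_single.
  by apply: incident_comp; rewrite // /ends edgE ?ends_single.
have [a ha ea] := doubled_edge_in_Fk (q := i) hb ltac:(lia).
by exists a; [apply: incident_comp; rewrite ?ea | rewrite ea].
Qed.

(* The two single edges at p_j (j < N) already give p_j degree 2 in Finf,
   so they are the only Finf edges at p_j. *)
Lemma Finf_at_attachment j (e : 'I_(size es)) : j < N -> e \in Finf -> incident e j ->
  e = fedge j.*2 k.*2 :> nat \/ e = fedge j.*2.+1 k.*2 :> nat.
Proof.
move=> hj he hinc.
pose s0 := edg (fedge j.*2 k.*2); pose s1 := edg (fedge j.*2.+1 k.*2).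
have f0 : s0 \in Finf by apply: single_edge_in_Finf; lia.
have f1 : s1 \in Finf by apply: single_edge_in_Finf; lia.
have s0E : val s0 = fedge j.*2 k.*2 by rewrite edgE //; apply: fedge_lt; lia.
have s1E : val s1 = fedge j.*2.+1 k.*2 by rewrite edgE //; apply: fedge_lt; lia.
have hjn : j < n by rewrite /pf_nverts; apply: ltn_addr; lia.
have inc_single (s : 'I_(size es)) b : b < N.*2 -> b %/ 2 = j ->
    val s = fedge b k.*2 -> incident s (vtx j).
  move=> hb hbj hs; rewrite /incident /ends hs ends_single // vtxE //=.
  by rewrite hbj eqxx orbT.
have i0 : incident s0 (vtx j) by apply: (inc_single _ j.*2); lia.
have i1 : incident s1 (vtx j) by apply: (inc_single _ j.*2.+1); lia.
have ie : incident e (vtx j) by rewrite /incident vtxE.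
have d01 : s0 != s1 by apply/eqP => /(congr1 val); rewrite s0E s1E => /fedge_inj []; lia.
have [<-|h0] := eqVneq s0 e; first by left.
have [<-|h1] := eqVneq s1 e; first by right.
by case: (linear_forest_no_deg3 lfFinf f0 f1 he i0 i1 ie d01 h0 h1).
Qed.

(* The tip w = p_(k-1) has no Finf edge: its only edge p_(k-2) w would be a
   third Finf edge at p_(k-2). *)
Lemma tip_Finf_degree : degF Finf (pf_tip k) = 0.
Proof.
apply/eqP; rewrite cards_eq0; apply/eqP/setP => e; rewrite !inE.
apply/negbTE/negP => /andP [he hinc]; move: hinc; rewrite /incident /pf_tip /ends.
case: (edge_cases (ltn_ord e)) => [heN|[b [q [c [hb hq hc ->]]]]|[b hb ->]].
- rewrite ends_P //= => hinc.
  have ej : e = N.-1 :> nat by move: hinc heN; case/orP => /eqP; lia.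
  have hi : incident e N.-1 by rewrite /incident /ends ends_P //= ej eqxx.
  case: (Finf_at_attachment (j := N.-1) ltac:(lia) he hi) heN => ->;
    by rewrite -addnA ltnNge leq_addr.
- by rewrite ends_double //= => /orP [] /eqP; lia.
- by rewrite ends_single //= => /orP [] /eqP; lia.
Qed.

(* Every edge of P is in Fk: an edge p_j p_(j+1) in Finf would be a third
   Finf edge at p_j. *)
Lemma P_edges_in_Fk (e : 'I_(size es)) : ends e \in pf_P_edges k -> e \in Fk.
Proof.
case/mapP => j; rewrite mem_iota add0n => /andP [_ hj] hee.
apply: notin_Finf; apply/negP => he.
have hinc : incident e j by rewrite /incident hee eqxx.
case: (Finf_at_attachment hj he hinc) => h; move: hee; rewrite /ends h ends_single //;
  [case; lia | lia | case; lia | lia].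
Qed.

End Forced.

End PathForcer.

Theorem proposition13 (k : nat) (hk : 2 <= k) :
  (exists Finf Fk : {set 'I_(size (pf_edges k))},
      inf_k_decomposition (pf_nverts k) k Finf Fk) /\
  (forall Finf Fk : {set 'I_(size (pf_edges k))},
      inf_k_decomposition (pf_nverts k) k Finf Fk ->
      degF Finf (pf_tip k) = 0 /\
      (forall e : 'I_(size (pf_edges k)),
          ends e \in pf_P_edges k -> e \in Fk)).
Proof.
split; first exact: path_forcer_decomposable hk.
move=> Finf Fk dec; split; first exact: (tip_Finf_degree hk dec).
by move=> e; apply: (P_edges_in_Fk hk dec).
Qed.
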